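(* Let $y_1\neq 0$ be a real number and let $Y,Y'\in\mathfrak o(V,K)$, written in block form $$Y=\begin{pmatrix}a&-\widetilde e^{\,*}&0\\ \widetilde b&\widetilde Y&\widetilde e\\0&-\widetilde b^{\,*}&-a\end{pmatrix},\qquad Y'=\begin{pmatrix}a'&-(\widetilde e')^{*}&0\\ \widetilde b'&\widetilde Y'&\widetilde e'\\0&-(\widetilde b')^{*}&-a'\end{pmatrix}$$ with $a,a'\in\mathbb R$, $\widetilde b,\widetilde e,\widetilde b',\widetilde e'\in\mathbb R^n$ and $\widetilde Y,\widetilde Y'\in\mathfrak o(\widetilde V,\widetilde K)$. Then the special tuples $(Y,y_1e_1)$ and $(Y',y_1e_1)$ are equivalent if and only if there exists $\widetilde P\in O(\widetilde V,\widetilde K)$ with $\widetilde Y'=\widetilde P\,\widetilde Y\,\widetilde P^{-1}$.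
   Context: Let $n\ge 0$ be an integer and let $\widetilde K$ be a real symmetric $n\times n$ matrix with $\widetilde K^2=I_n$; let $\widetilde V=\mathbb R^n$, $\widetilde x^{\,*}=\widetilde x^{\,T}\widetilde K$, $O(\widetilde V,\widetilde K)=\{\widetilde P:\widetilde P^T\widetilde K\widetilde P=\widetilde K\}$, $\mathfrak o(\widetilde V,\widetilde K)=\{\widetilde X:\widetilde X^T\widetilde K+\widetilde K\widetilde X=0\}$. Let $V=\mathbb R^{n+2}$ with standard basis $e_1,\dots,e_{n+2}$ (the middle $n$ coordinates identified with $\widetilde V$), and let $K=\begin{pmatrix}0&0&1\\0&\widetilde K&0\\1&0&0\end{pmatrix}$ (block sizes $1,n,1$). For $x,w\in V$ write $x^*=x^TK$ and $L_{u,w}=u\,w^*-w\,u^*$. Let $O(V,K)=\{P:P^TKP=K\}$, $\mathfrak o(V,K)=\{X:X^TK+KX=0\}$ (every element of which has the block form displayed in the claim), $O(V,K)_{e_{n+2}}=\{P\in O(V,K):Pe_{n+2}=e_{n+2}\}$. A special tuple is a pair $(Y,y)$ with $Y\in\mathfrak o(V,K)$, $y\in V$. Two special tuples $(Y,y)$ and $(Y',y')$ are equivalent if there exist $P\in O(V,K)_{e_{n+2}}$, vectors $v,p\in V$ with $p^*(e_{n+2})=0$, and $v_0\in\mathbb R$ such that $Y'+L_{v,e_{n+2}}=P(Y+L_{p,y})P^{-1}$ and $y'=Py+v_0e_{n+2}$. *)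

From HB Require Import structures.
From mathcomp Require Import all_boot all_order all_algebra.
From mathcomp Require Export reals.
Set Implicit Arguments. Unset Strict Implicit. Unset Printing Implicit Defensive.
Import Order.TTheory GRing.Theory Num.Theory.
Local Open Scope ring_scope.

Section Defs.
Variables (R : realType) (n : nat).

Definition Vvec := 'cV[R]_(1 + n + 1).
Definition Vmat := 'M[R]_(1 + n + 1).

(* K = [[0,0,1],[0,Kt,0],[1,0,0]] *)
Definition bigK (Kt : 'M[R]_n) : Vmat :=
  block_mx (block_mx (0 : 'M[R]_1) (0 : 'M[R]_(1, n)) (0 : 'M[R]_(n, 1)) Kt)
           (col_mx (1%:M : 'M[R]_1) (0 : 'M[R]_(n, 1)))
           (row_mx (1%:M : 'M[R]_1) (0 : 'M[R]_(1, n)))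
           (0 : 'M[R]_1).

Definition e_first : Vvec := col_mx (col_mx (1%:M : 'cV[R]_1) (0 : 'cV[R]_n)) (0 : 'cV[R]_1).
Definition e_last : Vvec := col_mx (0 : 'cV[R]_(1 + n)) (1%:M : 'cV[R]_1).

Definition vstar (K : Vmat) (x : Vvec) : 'rV[R]_(1 + n + 1) := x^T *m K.

Definition Lop (K : Vmat) (u w : Vvec) : Vmat := u *m vstar K w - w *m vstar K u.

Definition blockY (Kt : 'M[R]_n) (a : R) (b e : 'cV[R]_n) (Yt : 'M[R]_n) : Vmat :=
  block_mx (block_mx (a%:M : 'M[R]_1) (- (e^T *m Kt)) b Yt)
           (col_mx (0 : 'M[R]_1) e)
           (row_mx (0 : 'M[R]_1) (- (b^T *m Kt)))
           ((- a)%:M : 'M[R]_1).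

Definition in_O (m : nat) (K P : 'M[R]_m) : Prop := P^T *m K *m P = K.
Definition in_o (m : nat) (K X : 'M[R]_m) : Prop := X^T *m K + K *m X = 0.

Definition special_equiv (Kt : 'M[R]_n) (Y : Vmat) (y : Vvec) (Y' : Vmat) (y' : Vvec)
  : Prop :=
  let K := bigK Kt in
  exists (P : Vmat) (v p : Vvec) (v0 : R),
    [/\ in_O K P, P *m e_last = e_last,
        vstar K p *m e_last = 0,
        Y' + Lop K v e_last = P *m (Y + Lop K p y) *m invmx P
      & y' = P *m y + v0 *: e_last].

End Defs.

(* An equivalence (P, v, p, v0) of the two special tuples fixes e_{n+2} and
   sends e_1 into e_1 + R e_{n+2}; being K-orthogonal, P then preserves the
   middle summand R^n and restricts there to some Pt in O(V~, K~).  The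
   correction terms L_{v, e_{n+2}} and L_{p, y1 e_1} vanish on the middle block,
   so comparing middle blocks of (Y' + L) P = P (Y + L) gives Y~' Pt = Pt Y~.
   Conversely, for P = diag(1, Pt, 1) these correction terms shift exactly the
   a, b~ and e~ components of Y, so they absorb the difference between
   P Y P^-1 and Y'. *)

From mathcomp Require Import all_boot all_order all_algebra reals.
Set Implicit Arguments. Unset Strict Implicit. Unset Printing Implicit Defensive.
Import GRing.Theory Num.Theory.
Local Open Scope ring_scope.

Section Block3.
Variables (R : pzRingType) (m1 m2 m3 : nat).
(* %N matters: in ring_scope, + on nat is the Nmodule addition, which does not
   match addn syntactically, and rewriting with the lemmas below would fail. *)
Local Notation m := (m1 + m2 + m3)%N.

Definition block3_mx
  (A11 : 'M[R]_m1) (A12 : 'M[R]_(m1, m2)) (A13 : 'M[R]_(m1, m3))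
  (A21 : 'M[R]_(m2, m1)) (A22 : 'M[R]_m2) (A23 : 'M[R]_(m2, m3))
  (A31 : 'M[R]_(m3, m1)) (A32 : 'M[R]_(m3, m2)) (A33 : 'M[R]_m3) : 'M_m :=
  block_mx (block_mx A11 A12 A21 A22) (col_mx A13 A23) (row_mx A31 A32) A33.

Definition col3_mx p (x1 : 'M[R]_(m1, p)) (x2 : 'M[R]_(m2, p)) (x3 : 'M[R]_(m3, p)) :
  'M[R]_(m, p) := col_mx (col_mx x1 x2) x3.

Definition row3_mx p (x1 : 'M[R]_(p, m1)) (x2 : 'M[R]_(p, m2)) (x3 : 'M[R]_(p, m3)) :
  'M[R]_(p, m) := row_mx (row_mx x1 x2) x3.

Ltac unblock := rewrite /block3_mx /col3_mx /row3_mx ?mulmx_block ?mul_block_col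
  ?mul_row_block ?mul_col_row ?mul_row_col ?mul_mx_row ?mul_col_mx ?add_block_mx
  ?add_col_mx ?add_row_mx ?opp_block_mx ?opp_col_mx ?opp_row_mx ?scale_col_mx
  ?tr_block_mx ?tr_col_mx ?tr_row_mx ?addrA.

Lemma block3_mx_exists (A : 'M[R]_m) :
  exists A11 A12 A13 A21 A22 A23 A31 A32 A33,
    A = block3_mx A11 A12 A13 A21 A22 A23 A31 A32 A33.
Proof.
rewrite -(submxK A) -(submxK (ulsubmx A)) -(vsubmxK (ursubmx A)) -(hsubmxK (dlsubmx A)).
by do 9 eexists.
Qed.

Lemma col3_mx_exists p (x : 'M[R]_(m, p)) : exists x1 x2 x3, x = col3_mx x1 x2 x3.
Proof. by rewrite -(vsubmxK x) -(vsubmxK (usubmx x)); do 3 eexists. Qed.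

Lemma scalar_mx_block3 c : c%:M = block3_mx c%:M 0 0 0 c%:M 0 0 0 c%:M.
Proof. by rewrite /block3_mx !scalar_mx_block col_mx0 row_mx0. Qed.

Variables (A11 : 'M[R]_m1) (A12 : 'M[R]_(m1, m2)) (A13 : 'M[R]_(m1, m3))
  (A21 : 'M[R]_(m2, m1)) (A22 : 'M[R]_m2) (A23 : 'M[R]_(m2, m3))
  (A31 : 'M[R]_(m3, m1)) (A32 : 'M[R]_(m3, m2)) (A33 : 'M[R]_m3).
Variables (B11 : 'M[R]_m1) (B12 : 'M[R]_(m1, m2)) (B13 : 'M[R]_(m1, m3))
  (B21 : 'M[R]_(m2, m1)) (B22 : 'M[R]_m2) (B23 : 'M[R]_(m2, m3))
  (B31 : 'M[R]_(m3, m1)) (B32 : 'M[R]_(m3, m2)) (B33 : 'M[R]_m3).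
Local Notation A := (block3_mx A11 A12 A13 A21 A22 A23 A31 A32 A33).
Local Notation B := (block3_mx B11 B12 B13 B21 B22 B23 B31 B32 B33).

Lemma mulmx_block3 : A *m B =
  block3_mx (A11 *m B11 + A12 *m B21 + A13 *m B31) (A11 *m B12 + A12 *m B22 + A13 *m B32)
            (A11 *m B13 + A12 *m B23 + A13 *m B33)
            (A21 *m B11 + A22 *m B21 + A23 *m B31) (A21 *m B12 + A22 *m B22 + A23 *m B32)
            (A21 *m B13 + A22 *m B23 + A23 *m B33)
            (A31 *m B11 + A32 *m B21 + A33 *m B31) (A31 *m B12 + A32 *m B22 + A33 *m B32)
            (A31 *m B13 + A32 *m B23 + A33 *m B33).
Proof. by unblock. Qed.

Lemma add_block3 : A + B =
  block3_mx (A11 + B11) (A12 + B12) (A13 + B13) (A21 + B21) (A22 + B22) (A23 + B23)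
            (A31 + B31) (A32 + B32) (A33 + B33).
Proof. by unblock. Qed.

Lemma opp_block3 :
  - A = block3_mx (- A11) (- A12) (- A13) (- A21) (- A22) (- A23) (- A31) (- A32) (- A33).
Proof. by unblock. Qed.

Lemma tr_block3 : A^T = block3_mx A11^T A21^T A31^T A12^T A22^T A32^T A13^T A23^T A33^T.
Proof. by unblock. Qed.

Lemma eq_block3 : A = B ->
  [/\ A11 = B11, A12 = B12, A13 = B13, A21 = B21 &
   [/\ A22 = B22, A23 = B23, A31 = B31, A32 = B32 & A33 = B33]].
Proof.
by move=> /eq_block_mx[/eq_block_mx[-> -> -> ->] /eq_col_mx[-> ->] /eq_row_mx[-> ->] ->].
Qed.

Lemma mul_block3_col p (x1 : 'M[R]_(m1, p)) x2 x3 : A *m col3_mx x1 x2 x3 =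
  col3_mx (A11 *m x1 + A12 *m x2 + A13 *m x3) (A21 *m x1 + A22 *m x2 + A23 *m x3)
          (A31 *m x1 + A32 *m x2 + A33 *m x3).
Proof. by unblock. Qed.

Lemma mul_row_block3 p (x1 : 'M[R]_(p, m1)) x2 x3 : row3_mx x1 x2 x3 *m A =
  row3_mx (x1 *m A11 + x2 *m A21 + x3 *m A31) (x1 *m A12 + x2 *m A22 + x3 *m A32)
          (x1 *m A13 + x2 *m A23 + x3 *m A33).
Proof. by unblock. Qed.

Variables (p : nat) (x1 : 'M[R]_(m1, p)) (x2 : 'M[R]_(m2, p)) (x3 : 'M[R]_(m3, p)).
Variables (y1 : 'M[R]_(m1, p)) (y2 : 'M[R]_(m2, p)) (y3 : 'M[R]_(m3, p)).
Local Notation x := (col3_mx x1 x2 x3).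
Local Notation y := (col3_mx y1 y2 y3).

Lemma tr_col3 : x^T = row3_mx x1^T x2^T x3^T.
Proof. by unblock. Qed.

Lemma scale_col3 c : c *: x = col3_mx (c *: x1) (c *: x2) (c *: x3).
Proof. by unblock. Qed.

Lemma add_col3 : x + y = col3_mx (x1 + y1) (x2 + y2) (x3 + y3).
Proof. by unblock. Qed.

Lemma eq_col3 : x = y -> [/\ x1 = y1, x2 = y2 & x3 = y3].
Proof. by move=> /eq_col_mx[/eq_col_mx[-> ->] ->]. Qed.

Lemma mul_row3_col3 q (z1 : 'M[R]_(q, m1)) z2 z3 :
  row3_mx z1 z2 z3 *m x = z1 *m x1 + z2 *m x2 + z3 *m x3.
Proof. by unblock. Qed.

Lemma mul_col3_row3 (z1 : 'M[R]_(p, m1)) (z2 : 'M[R]_(p, m2)) (z3 : 'M[R]_(p, m3)) :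
  x *m row3_mx z1 z2 z3 = block3_mx (x1 *m z1) (x1 *m z2) (x1 *m z3)
    (x2 *m z1) (x2 *m z2) (x2 *m z3) (x3 *m z1) (x3 *m z2) (x3 *m z3).
Proof. by unblock. Qed.

End Block3.

Section MiddleBlock.
Variables (R : pzRingType) (m1 m2 m3 : nat).
Local Notation m := (m1 + m2 + m3)%N.

Definition mid_mx (A : 'M[R]_m) : 'M[R]_m2 := drsubmx (ulsubmx A).

Lemma mid_block3 A11 A12 A13 A21 (A22 : 'M[R]_m2) A23 A31 A32 A33 :
  mid_mx (@block3_mx R m1 m2 m3 A11 A12 A13 A21 A22 A23 A31 A32 A33) = A22.
Proof. by rewrite /mid_mx block_mxKul block_mxKdr. Qed.

Lemma mid_mxD (A B : 'M[R]_m) : mid_mx (A + B) = mid_mx A + mid_mx B.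
Proof.
have [A11 [A12 [A13 [A21 [A22 [A23 [A31 [A32 [A33 ->]]]]]]]]] := block3_mx_exists A.
have [B11 [B12 [B13 [B21 [B22 [B23 [B31 [B32 [B33 ->]]]]]]]]] := block3_mx_exists B.
by rewrite add_block3 !mid_block3.
Qed.

Variables (P11 : 'M[R]_m1) (P13 : 'M[R]_(m1, m3)) (P22 : 'M[R]_m2)
  (P31 : 'M[R]_(m3, m1)) (P33 : 'M[R]_m3).
Local Notation P := (block3_mx P11 0 P13 0 P22 0 P31 0 P33).

Lemma mid_mxMl (A : 'M[R]_m) : mid_mx (P *m A) = P22 *m mid_mx A.
Proof.
have [A11 [A12 [A13 [A21 [A22 [A23 [A31 [A32 [A33 ->]]]]]]]]] := block3_mx_exists A.
by rewrite mulmx_block3 !mid_block3 !mul0mx add0r addr0.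
Qed.

Lemma mid_mxMr (A : 'M[R]_m) : mid_mx (A *m P) = mid_mx A *m P22.
Proof.
have [A11 [A12 [A13 [A21 [A22 [A23 [A31 [A32 [A33 ->]]]]]]]]] := block3_mx_exists A.
by rewrite mulmx_block3 !mid_block3 !mulmx0 add0r addr0.
Qed.

End MiddleBlock.

Arguments mid_mx {R m1 m2 m3}.

Lemma in_O_unitmx (R : realType) m (K P : 'M[R]_m) :
  K \in unitmx -> in_O K P -> P \in unitmx.
Proof.
move=> Ku hO; have : (invmx K *m P^T *m K) *m P = 1%:M.
  by rewrite -!mulmxA (mulmxA P^T) hO mulVmx.
by case/mulmx1_unit.
Qed.

Ltac simpmx := rewrite ?(mul0mx, mulmx0, mul1mx, mulmx1, add0r, addr0, oppr0, subr0,
  sub0r, trmx0, trmx1, scaler0, scale0r, tr_scalar_mx, opprK).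

Section SpecialTuples.
Variables (R : realType) (n : nat) (Kt : 'M[R]_n).
Local Notation K := (bigK Kt).
Local Notation block3 := (@block3_mx R 1 n 1).
Local Notation col3 := (@col3_mx R 1 n 1 1).

Lemma bigKE : K = block3 0 0 1%:M 0 Kt 0 1%:M 0 0.
Proof. by []. Qed.

Lemma blockYE a b e Yt : blockY Kt a b e Yt =
  block3 a%:M (- (e^T *m Kt)) 0 b Yt e 0 (- (b^T *m Kt)) (- a)%:M.
Proof. by []. Qed.

Lemma e_firstE : e_first R n = col3 1%:M 0 0.
Proof. by []. Qed.

Lemma e_lastE : e_last R n = col3 0 0 1%:M.
Proof. by rewrite /e_last /col3_mx col_mx0. Qed.

Lemma bigK_unitmx : Kt *m Kt = 1%:M -> K \in unitmx.
Proof.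
move=> hKsq; have : K *m K = 1%:M.
  by rewrite bigKE mulmx_block3 [RHS]scalar_mx_block3; simpmx; rewrite hKsq.
by case/mulmx1_unit.
Qed.

Lemma vstar_col3 (x1 : 'cV[R]_1) x2 (x3 : 'cV[R]_1) :
  vstar K (col3 x1 x2 x3) = row3_mx x3^T (x2^T *m Kt) x1^T.
Proof. by rewrite /vstar tr_col3 bigKE mul_row_block3; simpmx. Qed.

Lemma mid_blockY a b e Yt : mid_mx (blockY Kt a b e Yt) = Yt.
Proof. by rewrite blockYE mid_block3. Qed.

Lemma mid_Lop_outer u (w1 w3 : 'cV[R]_1) : mid_mx (Lop K u (col3 w1 0 w3)) = 0.
Proof.
have [u1 [u2 [u3 ->]]] := col3_mx_exists u.
by rewrite /Lop !vstar_col3 !mul_col3_row3 opp_block3 add_block3 mid_block3; simpmx.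
Qed.

Lemma blockY_add_Lop_last a b e Yt s u :
  blockY Kt a b e Yt + Lop K (col3 s%:M u 0) (e_last R n) = blockY Kt (a + s) (b + u) e Yt.
Proof.
rewrite /Lop e_lastE !vstar_col3 !mul_col3_row3 blockYE opp_block3 !add_block3; simpmx.
by rewrite blockYE !opprD !raddfD /= !raddfN mulmxDl opprD.
Qed.

Lemma blockY_add_Lop_first a b e Yt c s u :
  blockY Kt a b e Yt + Lop K (col3 0 u s%:M) (c *: e_first R n) =
  blockY Kt (a - c * s) b (e + c *: u) Yt.
Proof.
rewrite /Lop e_firstE scale_col3 !vstar_col3 !mul_col3_row3 blockYE opp_block3.
rewrite !add_block3; simpmx.
rewrite scalemx1 tr_scalar_mx !mul_scalar_mx mul_mx_scalar !scale_scalar_mx blockYE.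
congr block3_mx; first by rewrite raddfB.
  by rewrite [in RHS]raddfD /= [(_ *: u)^T]linearZ /= mulmxDl -scalemxAl opprD.
by rewrite -raddfD opprB addrC mulrC.
Qed.

Definition mid_lift (Pt : 'M[R]_n) : Vmat R n := block3 1%:M 0 0 0 Pt 0 0 0 1%:M.

Lemma mid_lift_col3 Pt x1 x2 x3 : mid_lift Pt *m col3 x1 x2 x3 = col3 x1 (Pt *m x2) x3.
Proof. by rewrite mul_block3_col; simpmx. Qed.

Lemma in_O_mid_lift Pt : in_O Kt Pt -> in_O K (mid_lift Pt).
Proof. by move=> hO; rewrite /in_O bigKE tr_block3 !mulmx_block3; simpmx; rewrite hO. Qed.

Lemma mid_lift_blockY Pt a b e Yt : in_O Kt Pt -> Pt \in unitmx ->
  mid_lift Pt *m blockY Kt a b e Yt =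
  blockY Kt a (Pt *m b) (Pt *m e) (Pt *m Yt *m invmx Pt) *m mid_lift Pt.
Proof.
move=> hO Ptu; have hKt x : (Pt *m x)^T *m Kt *m Pt = x^T *m Kt.
  by rewrite trmx_mul -!mulmxA (mulmxA Pt^T) hO.
by rewrite !blockYE !mulmx_block3; simpmx; rewrite !mulNmx !hKt mulmxKV.
Qed.

Lemma in_O_stabilizer P c : in_O K P -> P *m e_last R n = e_last R n ->
    P *m e_first R n = e_first R n + c *: e_last R n ->
  exists2 Pt, in_O Kt Pt & P = block3 1%:M 0 0 0 Pt 0 c%:M 0 1%:M.
Proof.
have [A11 [A12 [A13 [A21 [A22 [A23 [A31 [A32 [A33 ->]]]]]]]]] := block3_mx_exists P.
rewrite e_firstE e_lastE scale_col3 add_col3 !mul_block3_col; simpmx.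
move=> hO /eq_col3[? ? ?] /eq_col3[? ? ?]; subst.
move: hO; rewrite /in_O bigKE tr_block3 !mulmx_block3 scalemx1; simpmx.
case/eq_block3=> _ h12 _ _ [h22 _ _ h32 _]; subst A12.
move: h12 h22; simpmx=> -> hO.
by exists A22.
Qed.

Lemma special_equiv_blockY_mid (y1 : R) a b e Yt a' b' e' Yt' :
    y1 != 0 -> Kt *m Kt = 1%:M ->
    special_equiv Kt (blockY Kt a b e Yt) (y1 *: e_first R n)
                     (blockY Kt a' b' e' Yt') (y1 *: e_first R n) ->
  exists2 Pt, in_O Kt Pt & Yt' *m Pt = Pt *m Yt.
Proof.
move=> hy1 hKsq [P [v [p [v0 [hO hPe _ hconj hy]]]]].
have Pu := in_O_unitmx (bigK_unitmx hKsq) hO.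
have hPe1 : P *m e_first R n = e_first R n + (- (v0 / y1)) *: e_last R n.
  apply: (scalerI hy1); rewrite scalerDr scalerA mulrN mulrCA mulfV // mulr1 scaleNr.
  by rewrite scalemxAr [in RHS]hy addrK.
have [Pt hOt hP] := in_O_stabilizer hO hPe hPe1.
exists Pt => //.
have hPX : (blockY Kt a' b' e' Yt' + Lop K v (e_last R n)) *m P =
           P *m (blockY Kt a b e Yt + Lop K p (y1 *: e_first R n)).
  by rewrite hconj mulmxKV.
move/(congr1 mid_mx): hPX.
rewrite hP mid_mxMr mid_mxMl !(mid_mxD (blockY _ _ _ _ _)).
rewrite e_lastE e_firstE scale_col3 !scaler0.
by rewrite !mid_Lop_outer !mid_blockY !addr0.
Qed.

Lemma special_equiv_blockY_conj (y1 : R) a b e Yt a' b' e' Pt :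
    y1 != 0 -> Kt *m Kt = 1%:M -> in_O Kt Pt ->
  special_equiv Kt (blockY Kt a b e Yt) (y1 *: e_first R n)
                   (blockY Kt a' b' e' (Pt *m Yt *m invmx Pt)) (y1 *: e_first R n).
Proof.
move=> hy1 hKsq hOt.
have [Ktu _] := mulmx1_unit hKsq.
have Ptu := in_O_unitmx Ktu hOt.
have hO := in_O_mid_lift hOt.
have Pu := in_O_unitmx (bigK_unitmx hKsq) hO.
pose u := y1^-1 *: (invmx Pt *m e' - e).
exists (mid_lift Pt), (col3 (a - a')%:M (Pt *m b - b') 0), (col3 0 u 0%:M), 0.
split=> //.
- by rewrite e_lastE mid_lift_col3 mulmx0.
- by rewrite vstar_col3 e_lastE mul_row3_col3; simpmx.
- rewrite blockY_add_Lop_last blockY_add_Lop_first mid_lift_blockY // mulmxK //.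
  have -> : e + y1 *: u = invmx Pt *m e' by rewrite /u scalerA mulfV // scale1r subrKC.
  by rewrite mulKVmx // mulr0 subr0 !subrKC.
- by rewrite scale0r addr0 e_firstE scale_col3 mid_lift_col3 scaler0 mulmx0.
Qed.

End SpecialTuples.

Theorem proposition6 (R : realType) (n : nat) (Kt : 'M[R]_n)
    (hKsym : Kt^T = Kt) (hKsq : Kt *m Kt = 1%:M)
    (y1 : R) (hy1 : y1 != 0)
    (a a' : R) (b e b' e' : 'cV[R]_n) (Yt Yt' : 'M[R]_n)
    (hYt : in_o Kt Yt) (hYt' : in_o Kt Yt') :
  special_equiv Kt (blockY Kt a b e Yt) (y1 *: e_first R n)
                   (blockY Kt a' b' e' Yt') (y1 *: e_first R n)
  <-> exists Pt : 'M[R]_n, in_O Kt Pt /\ Yt' = Pt *m Yt *m invmx Pt.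
Proof.
split=> [/(special_equiv_blockY_mid hy1 hKsq) [Pt hOt hPt] | [Pt [hOt ->]]].
  have [Ktu _] := mulmx1_unit hKsq.
  by exists Pt; rewrite -hPt mulmxK // (in_O_unitmx Ktu hOt).
exact: special_equiv_blockY_conj.
Qed.
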